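(* Let $P:\mathbb{R}^d\to\mathbb{R}$ be a positive homogeneous function and let $\mathrm{Sym}(P)=\{O\in\mathrm{End}(\mathbb{R}^d): P(O\xi)=P(\xi)\text{ for all }\xi\in\mathbb{R}^d\}$. Then $\mathrm{Sym}(P)$ is a compact subgroup of the general linear group $\mathrm{GL}(\mathbb{R}^d)$.
   Context: For $E\in\mathrm{End}(\mathbb{R}^d)$ and $t>0$ set $t^E:=\exp(\log(t)E)=\sum_{k\ge 0}\frac{(\log t)^k}{k!}E^k$. A function $P:\mathbb{R}^d\to\mathbb{C}$ is homogeneous with respect to $E$ if $P(t^E\xi)=tP(\xi)$ for all $t>0$, $\xi\in\mathbb{R}^d$; the exponent set $\mathrm{Exp}(P)$ is the set of all such $E$. A real-valued $P$ is positive definite if $P\ge 0$ and $P(\xi)=0$ only when $\xi=0$. A function $P:\mathbb{R}^d\to\mathbb{R}$ is positive homogeneous if it is continuous, positive definite, $\mathrm{Exp}(P)\neq\emptyset$, and its unital level set $S_P=\{\eta\in\mathbb{R}^d:P(\eta)=1\}$ is compact. (Known fact that may be used: a continuous positive definite $P$ with nonempty exponent set is positive homogeneous iff $\lim_{|\xi|\to\infty}P(\xi)=\infty$, iff $\lim_{t\to 0}\|t^E\|=0$ for every $E\in\mathrm{Exp}(P)$.) *)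

From HB Require Import structures.
From mathcomp Require Import all_boot all_order all_algebra.
From mathcomp Require Import all_classical all_reals all_analysis.
Set Implicit Arguments. Unset Strict Implicit. Unset Printing Implicit Defensive.
Import Order.TTheory GRing.Theory Num.Theory.
Import numFieldNormedType.Exports.
Local Open Scope classical_set_scope.
Local Open Scope ring_scope.

(* R^d is modelled by column vectors 'cV[R]_d, End(R^d) by 'M[R]_d acting by *m. *)

(* t^E := exp(log(t) E) = sum_{k>=0} (log t)^k / k! E^k, the limit of the
   partial sums in the normed space of d x d matrices. *)
Definition mxpowr (R : realType) (d : nat) (t : R) (E : 'M[R]_d) : 'M[R]_d :=
  lim ((fun n : nat => \sum_(0 <= k < n) (((ln t) ^+ k / (k`!)%:R) *: E ^+ k))
       @ \oo).

Definition homogeneous_wrt (R : realType) (d : nat) (P : 'cV[R]_d -> R)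
  (E : 'M[R]_d) : Prop :=
  forall (t : R) (xi : 'cV[R]_d), 0 < t -> P (mxpowr t E *m xi) = t * P xi.

Definition Exp (R : realType) (d : nat) (P : 'cV[R]_d -> R) : set 'M[R]_d :=
  [set E | homogeneous_wrt P E].

Definition positive_definite (R : realType) (d : nat) (P : 'cV[R]_d -> R) : Prop :=
  (forall xi, 0 <= P xi) /\ (forall xi, P xi = 0 -> xi = 0).

Definition unital_level_set (R : realType) (d : nat) (P : 'cV[R]_d -> R)
  : set 'cV[R]_d := [set eta | P eta = 1].

Definition positive_homogeneous (R : realType) (d : nat) (P : 'cV[R]_d -> R)
  : Prop :=
  continuous P /\ positive_definite P /\ Exp P !=set0 /\
  compact (unital_level_set P).

Definition Sym (R : realType) (d : nat) (P : 'cV[R]_d -> R) : set 'M[R]_d :=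
  [set O | forall xi : 'cV[R]_d, P (O *m xi) = P xi].

Definition compact_subgroup_GL (R : realType) (d : nat) (G : set 'M[R]_d)
  : Prop :=
  (forall O, G O -> O \in unitmx) /\
  G 1%:M /\
  (forall O1 O2, G O1 -> G O2 -> G (O1 *m O2)) /\
  (forall O, G O -> G (invmx O)) /\
  compact G.

From mathcomp Require Import all_boot all_order all_algebra.
From mathcomp Require Import all_classical all_reals all_analysis.
From mathcomp Require Import lra.
Set Implicit Arguments. Unset Strict Implicit. Unset Printing Implicit Defensive.
Import Order.TTheory GRing.Theory Num.Theory.
Import numFieldNormedType.Exports.
Local Open Scope classical_set_scope.
Local Open Scope ring_scope.

(* Since P vanishes only at 0 and (by homogeneity) P 0 = 0, every O in Sym(P)
   and every t^E is injective, hence invertible, and Sym(P) is a group.  It is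
   closed because P is continuous.  It is bounded because O maps the basis
   vector e_j into the level set {P = P e_j}, and each level set {P = c} with
   c > 0 is compact, being the image of the compact set S_P under the inverse
   of the invertible map (1/c)^E.  Heine-Borel concludes. *)

Lemma inj_unitmx (F : fieldType) d (A : 'M[F]_d) :
  (forall xi : 'cV[F]_d, A *m xi = 0 -> xi = 0) -> A \in unitmx.
Proof.
move=> Ainj; rewrite -unitmx_tr -row_free_unit; apply: inj_row_free => v.
move=> /(congr1 trmx); rewrite trmx_mul trmxK trmx0 => /Ainj.
by move=> /(congr1 trmx); rewrite trmxK trmx0.
Qed.

Section MatrixTopology.
Variable R : realType.

Lemma continuous_mx_entries (T : topologicalType) m n (f : T -> 'M[R]_(m, n)) :
  (forall i j, continuous (fun x => f x i j)) -> continuous f.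
Proof.
move=> fc x A /nbhs_ballP[e /= e0 eA].
have : \forall y \near x, forall ij : 'I_m * 'I_n,
    ball (f x ij.1 ij.2) e (f y ij.1 ij.2).
  apply: filter_forall => ij.
  exact: (fc ij.1 ij.2 x) _ (nbhsx_ballx _ _ e0).
apply: filterS => y fxy; apply: eA; split => // i j; exact: (fxy (i, j)).
Qed.

Lemma continuous_mulmx (T : topologicalType) m n p
    (f : T -> 'M[R]_(m, n)) (g : T -> 'M[R]_(n, p)) :
  continuous f -> continuous g -> continuous (fun x => f x *m g x).
Proof.
move=> fc gc; apply: continuous_mx_entries => i j.
under [X in continuous X]funext => x do rewrite mxE.
apply: (@continuous_big R _ +%R 0 xpredT); first exact: (@add_continuous R).
move=> k _ x.
apply: continuousM.
- exact: (continuous_comp (fc x) (@coord_continuous R _ _ i k (f x))).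
- exact: (continuous_comp (gc x) (@coord_continuous R _ _ k j (g x))).
Qed.

Lemma vec_mx_continuous m n : continuous (@vec_mx R m n).
Proof.
apply: continuous_mx_entries => i j.
under [X in continuous X]funext => v do rewrite mxE.
exact: coord_continuous.
Qed.

Lemma mx_norm_ge_entry m n (A : 'M[R]_(m, n)) i j : `|A i j| <= `|A|.
Proof.
rewrite [leRHS]/Num.norm /= mx_normrE.
by apply/bigmax_geP; right => /=; exists (i, j).
Qed.

Lemma mx_norm_le m n (A : 'M[R]_(m, n)) (M : R) :
  0 <= M -> (forall i j, `|A i j| <= M) -> `|A| <= M.
Proof.
move=> M0 AM; rewrite [leLHS]/Num.norm /= mx_normrE.
by apply: bigmax_le => // -[i j] _; exact: AM.
Qed.

Lemma bounded_mx_cols m n (S : set 'M[R]_(m, n)) :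
  (forall j, bounded_set [set col j A | A in S]) -> bounded_set S.
Proof.
move=> Sj.
have Sall : \forall M \near +oo, forall j A, S A -> `|col j A| <= M.
  apply: filter_forall => j.
  near=> M; have colM : globally [set col j B | B in S] [set x | `|x| <= M].
    by near: M; exact: Sj.
  by move=> A SA; apply: colM; exists A.
rewrite /= /bounded_near; near=> M => A SA; apply: mx_norm_le => [|i j].
  by near: M; exact: nbhs_pinfty_ge (real0 R).
have colA : `|col j A| <= M.
  by move: j A SA; near: M; exact: Sall.
by apply: le_trans colA; have := mx_norm_ge_entry (col j A) i 0; rewrite mxE.
Unshelve. all: by end_near.
Qed.

Lemma bounded_closed_compact_mx m n (S : set 'M[R]_(m, n)) :
  bounded_set S -> closed S -> compact S.
Proof.
move=> Sb Sc; have -> : S = vec_mx @` (vec_mx @^-1` S).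
  apply/seteqP; split => [A SA | _ [v Sv <-]] //.
  by exists (mxvec A); rewrite /= mxvecK.
apply/continuous_compact; first exact/continuous_subspaceT/vec_mx_continuous.
apply: bounded_closed_compact; last first.
  exact: (continuous_closedP _).1 (@vec_mx_continuous m n) _ Sc.
rewrite /= /bounded_near; near=> M => v Sv.
have SM : globally S [set A | `|A| <= M] by near: M; exact: Sb.
have vM := SM _ Sv.
apply: mx_norm_le => [|a k]; first exact: le_trans (normr_ge0 _) vM.
rewrite (ord1 a); case/mxvec_indexP: k => i j.
by rewrite -[v]vec_mxK mxvecE; apply: le_trans vM; exact: mx_norm_ge_entry.
Unshelve. all: by end_near.
Qed.

End MatrixTopology.

Lemma sub_bounded_set (K : realType) (V : normedModType K) (A B : set V) :
  A `<=` B -> bounded_set B -> bounded_set A.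
Proof. by move=> AB; apply: sub_boundedr => Q BQ x /AB; exact: BQ. Qed.

Section PositiveHomogeneous.
Variables (R : realType) (d : nat) (P : 'cV[R]_d -> R) (E : 'M[R]_d).
Hypotheses (P_posdef : positive_definite P) (P_homog : homogeneous_wrt P E).

Lemma homogeneous_P0 : P 0 = 0.
Proof. by move: (@P_homog 2 0 (ltr0Sn _ 1)); rewrite mulmx0; lra. Qed.

Lemma posdef_unitmx (A : 'M[R]_d) :
  (forall xi, P (A *m xi) = 0 -> P xi = 0) -> A \in unitmx.
Proof.
move=> AP; apply: inj_unitmx => xi Axi0; apply: P_posdef.2; apply: AP.
by rewrite Axi0 homogeneous_P0.
Qed.

Lemma Sym_unitmx A : Sym P A -> A \in unitmx.
Proof. by move=> SA; apply: posdef_unitmx => xi; rewrite SA. Qed.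

Lemma mxpowr_unitmx t : 0 < t -> mxpowr t E \in unitmx.
Proof.
move=> t0; apply: posdef_unitmx => xi; rewrite P_homog // => /eqP.
by rewrite mulf_eq0 gt_eqF //= => /eqP.
Qed.

Hypothesis SP_compact : compact (unital_level_set P).

Lemma compact_level_set c : 0 < c -> compact [set xi | P xi = c].
Proof.
move=> c0; set M := mxpowr c^-1 E.
have Mu : M \in unitmx by apply: mxpowr_unitmx; rewrite invr_gt0.
have -> : [set xi | P xi = c] = (fun eta => invmx M *m eta) @` unital_level_set P.
  apply/seteqP; split => [xi /= Pxi | _ [eta Peta <-]] /=.
  - exists (M *m xi); last by rewrite mulmxA mulVmx // mul1mx.
    by rewrite /unital_level_set /= P_homog ?invr_gt0 // Pxi mulVf ?gt_eqF.
  - have := @P_homog c^-1 (invmx M *m eta); rewrite invr_gt0 => /(_ c0).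
    rewrite -/M mulmxA mulmxV // mul1mx Peta => /(congr1 (fun x => c * x)).
    by rewrite mulr1 mulrA divff ?gt_eqF // mul1r.
apply: continuous_compact SP_compact.
exact/continuous_subspaceT/continuous_mulmx/(fun _ => cvg_id)/cst_continuous.
Qed.

Lemma Sym_bounded : bounded_set (Sym P).
Proof.
apply: bounded_mx_cols => j.
have ej_pos : 0 < P (delta_mx j 0).
  rewrite lt0r P_posdef.1 andbT; apply/eqP => /P_posdef.2 /matrixP /(_ j 0).
  by rewrite !mxE !eqxx /= => /eqP; rewrite oner_eq0.
apply: sub_bounded_set (compact_bounded (compact_level_set ej_pos)).
by move=> _ [A SA <-]; rewrite /= colE SA.
Qed.

End PositiveHomogeneous.

Lemma Sym_closed (R : realType) d (P : 'cV[R]_d -> R) :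
  continuous P -> closed (Sym P).
Proof.
move=> Pc; have -> : Sym P = \bigcap_(xi in setT) [set A | P (A *m xi) = P xi].
  by apply/seteqP; split => [A SA xi _ | A SA xi] //=; exact: SA.
apply: closed_bigI => xi _.
have mulxi_cont : continuous (fun A : 'M[R]_d => A *m xi).
  exact: continuous_mulmx (fun _ => cvg_id) (@cst_continuous _ _ xi).
have PA_cont : continuous (fun A : 'M[R]_d => P (A *m xi)).
  by move=> A; exact: continuous_comp (mulxi_cont A) (Pc _).
by apply: (continuous_closedP _).1 PA_cont [set y | y = P xi] _; exact: closed_eq.
Qed.

Theorem mainTheorem1 (R : realType) (d : nat) (P : 'cV[R]_d -> R) :
  positive_homogeneous P -> compact_subgroup_GL (Sym P).
Proof.
move=> [Pc [P_posdef [[E HE] SPc]]].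
have SymU := Sym_unitmx P_posdef HE.
split; first exact: SymU.
split; first by move=> xi; rewrite mul1mx.
split; first by move=> A1 A2 S1 S2 xi; rewrite -mulmxA S1 S2.
split.
  by move=> A SA xi; rewrite -[in RHS](mulKVmx (SymU A SA) xi) SA.
apply: bounded_closed_compact_mx; last exact: Sym_closed.
exact: (Sym_bounded P_posdef HE SPc).
Qed.
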